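(* Let $\mathcal{P}=\{X_i\mid i\in I\}$ be a partition of a set $X$, and let $f\in\Sigma(X,\mathcal{P})$. Then $f$ is an idempotent ($f^2=f$) if and only if each block map of $B(f,I)$ is an idempotent.
   Context: Maps are written on the right and composed left to right. For a partition $\mathcal{P}=\{X_i\mid i\in I\}$ of $X$ (distinct indices for distinct blocks), $T(X,\mathcal{P})=\{f\colon X\to X \mid \forall i\ \exists j:\ X_if\subseteq X_j\}$ and $\Sigma(X,\mathcal{P})=\{f\in T(X,\mathcal{P})\mid Xf\cap X_i\neq\emptyset\ \forall i\in I\}$. A block map is a map whose domain and codomain are both blocks of $\mathcal{P}$. If $Af\subseteq B$, the map $g\colon A\to B$, $xg=xf$, is said to be induced by $f$. For $f\in T(X,\mathcal{P})$ and $i\in I$, let $f_i\colon X_i\to X_j$ be the block map induced by $f$, where $X_j$ is the (unique) block containing $X_if$; $B(f,I)=\{f_i\mid i\in I\}$. A block map is an idempotent if its domain equals its codomain and it satisfies $f_i f_i=f_i$. *)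

(* A partition P = {X_i | i in I} of X (distinct indices for distinct blocks,
   blocks nonempty) is represented by a surjective block-index map
   p : X -> I, with X_i = { x | p x = i }. *)
Definition partition_map {X I : Type} (p : X -> I) : Prop :=
  forall i : I, exists x : X, p x = i.

Definition block {X I : Type} (p : X -> I) (i : I) (x : X) : Prop := p x = i.

Definition maps_into {X I : Type} (p : X -> I) (f : X -> X) (i j : I) : Prop :=
  forall x, block p i x -> block p j (f x).

Definition in_T {X I : Type} (p : X -> I) (f : X -> X) : Prop :=
  forall i : I, exists j : I, maps_into p f i j.

Definition in_Sigma {X I : Type} (p : X -> I) (f : X -> X) : Prop :=
  in_T p f /\ forall i : I, exists x : X, block p i (f x).

Definition idempotent {X : Type} (f : X -> X) : Prop :=
  (fun x => f (f x)) = f.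

(* The block map f_i : X_i -> X_j induced by f (X_j the unique block containing
   X_i f) is an idempotent: its domain equals its codomain (j = i, i.e. X_i f is
   contained in X_i) and f_i f_i = f_i as maps on X_i. *)
Definition block_map_idempotent {X I : Type} (p : X -> I) (f : X -> X) (i : I)
  : Prop :=
  maps_into p f i i /\ (forall x, block p i x -> f (f x) = f x).

From Stdlib Require Import FunctionalExtensionality.

(* If f f = f and some f y lies in X_i, then f fixes f y, so the block X_j
   receiving X_i f meets X_i and must be X_i itself: every block map is an
   idempotent of its own block. *)

Lemma idempotentP {X : Type} (f : X -> X) :
  idempotent f <-> forall x, f (f x) = f x.
Proof.
  split.
  - intros Hf x. exact (equal_f Hf x).
  - intros Hf. apply functional_extensionality. exact Hf.
Qed.

Lemma maps_into_fixed_block {X I : Type} (p : X -> I) (f : X -> X) (i j : I) :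
  (forall x, f (f x) = f x) ->
  (exists y, block p i (f y)) ->
  maps_into p f i j -> j = i.
Proof.
  intros Hff [y Hy] Hij.
  unfold maps_into, block in *.
  rewrite <- (Hij (f y) Hy), Hff.
  exact Hy.
Qed.

Lemma idempotent_block_map_idempotent {X I : Type} (p : X -> I) (f : X -> X) :
  in_Sigma p f -> idempotent f -> forall i, block_map_idempotent p f i.
Proof.
  intros [HT HS] Hf i.
  pose proof (proj1 (idempotentP f) Hf) as Hff.
  destruct (HT i) as [j Hij].
  assert (Hji : j = i) by exact (maps_into_fixed_block p f i j Hff (HS i) Hij).
  subst j.
  split; [exact Hij | intros x _; apply Hff].
Qed.

Lemma block_map_idempotent_idempotent {X I : Type} (p : X -> I) (f : X -> X) :
  (forall i, block_map_idempotent p f i) -> idempotent f.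
Proof.
  intros H.
  apply idempotentP.
  intros x.
  destruct (H (p x)) as [_ Hff].
  apply Hff.
  reflexivity.
Qed.

Theorem theorem5p6 (X I : Type) (p : X -> I) (f : X -> X) :
  partition_map p ->
  in_Sigma p f ->
  (idempotent f <-> forall i : I, block_map_idempotent p f i).
Proof.
  intros _ Hf.
  split.
  - exact (idempotent_block_map_idempotent p f Hf).
  - exact (block_map_idempotent_idempotent p f).
Qed.
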